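(* Let $(I,d)$ and $(I',d')$ be Ptolemy segments. Let $x_1,x_3$ be the boundary points of $I$ and $x'_1,x'_3$ the boundary points of $I'$, and let $x_2$ be an inner point of $I$ and $x'_2$ an inner point of $I'$. Then there exists a unique Möbius homeomorphism $\phi:I\to I'$ with $\phi(x_i)=x'_i$ for $i=1,2,3$.
   Context: A Ptolemy segment is a compact interval $I\subset\mathbb{R}$ with a metric $d$ inducing its standard topology such that $d(x_1,x_3)d(x_2,x_4)=d(x_1,x_2)d(x_3,x_4)+d(x_1,x_4)d(x_3,x_2)$ whenever $x_1,x_2,x_3,x_4$ lie in this order on $I$. A quadruple is admissible if no entry occurs three or four times; the cross ratio triple is $\mathrm{crt}(x,y,z,w)=(d(x,y)d(z,w):d(x,z)d(y,w):d(x,w)d(y,z))\in\mathbb{R}P^2$. A map between metric spaces is Möbius if it is injective and preserves $\mathrm{crt}$ of all admissible quadruples. *)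

From Stdlib Require Import Reals Lra.
Open Scope R_scope.

Definition inI (a b x : R) : Prop := a <= x <= b.

Definition is_metric_on (a b : R) (d : R -> R -> R) : Prop :=
  (forall x y, inI a b x -> inI a b y -> 0 <= d x y) /\
  (forall x y, inI a b x -> inI a b y -> (d x y = 0 <-> x = y)) /\
  (forall x y, inI a b x -> inI a b y -> d x y = d y x) /\
  (forall x y z, inI a b x -> inI a b y -> inI a b z ->
     d x z <= d x y + d y z).

Definition induces_standard_topology (a b : R) (d : R -> R -> R) : Prop :=
  forall x, inI a b x ->
    (forall eps, 0 < eps -> exists delta, 0 < delta /\
       forall y, inI a b y -> Rabs (x - y) < delta -> d x y < eps) /\
    (forall eps, 0 < eps -> exists delta, 0 < delta /\
       forall y, inI a b y -> d x y < delta -> Rabs (x - y) < eps).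

Definition ptolemy_property (a b : R) (d : R -> R -> R) : Prop :=
  forall x1 x2 x3 x4, inI a b x1 -> inI a b x4 ->
    x1 <= x2 -> x2 <= x3 -> x3 <= x4 ->
    d x1 x3 * d x2 x4 = d x1 x2 * d x3 x4 + d x1 x4 * d x3 x2.

Definition ptolemy_segment (a b : R) (d : R -> R -> R) : Prop :=
  a < b /\ is_metric_on a b d /\ induces_standard_topology a b d /\
  ptolemy_property a b d.

Definition admissible (x y z w : R) : Prop :=
  ~ (x = y /\ y = z) /\ ~ (x = y /\ y = w) /\
  ~ (x = z /\ z = w) /\ ~ (y = z /\ z = w).

Definition rp2_eq (p q : R * R * R) : Prop :=
  exists lam, lam <> 0 /\
    fst (fst q) = lam * fst (fst p) /\
    snd (fst q) = lam * snd (fst p) /\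
    snd q = lam * snd p.

Definition crt (d : R -> R -> R) (x y z w : R) : R * R * R :=
  (d x y * d z w, d x z * d y w, d x w * d y z).

Definition mobius_map (a b : R) (d : R -> R -> R)
    (a' b' : R) (d' : R -> R -> R) (f : R -> R) : Prop :=
  (forall x y, inI a b x -> inI a b y -> f x = f y -> x = y) /\
  (forall x y z w, inI a b x -> inI a b y -> inI a b z -> inI a b w ->
     admissible x y z w ->
     rp2_eq (crt d x y z w) (crt d' (f x) (f y) (f z) (f w))).

Definition continuous_on_metric (a b : R) (d : R -> R -> R)
    (d' : R -> R -> R) (f : R -> R) : Prop :=
  forall x, inI a b x -> forall eps, 0 < eps -> exists delta, 0 < delta /\
    forall y, inI a b y -> d x y < delta -> d' (f x) (f y) < eps.

Definition homeomorphism_on (a b : R) (d : R -> R -> R)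
    (a' b' : R) (d' : R -> R -> R) (f : R -> R) : Prop :=
  (forall x, inI a b x -> inI a' b' (f x)) /\
  continuous_on_metric a b d d' f /\
  exists g : R -> R,
    (forall y, inI a' b' y -> inI a b (g y)) /\
    (forall x, inI a b x -> g (f x) = x) /\
    (forall y, inI a' b' y -> f (g y) = y) /\
    continuous_on_metric a' b' d' d g.

(* Ptolemy's equality for the quadruple (x1, x, y, x3) says that
   d(x3,x) d(x1,y) - d(x3,y) d(x1,x) = ± d(x1,x3) d(x,y).  Dividing by the
   weight M(x) = d(x3,x) d(x1,x2) + d(x1,x) d(x3,x2) shows that the metric is
   d(x,y) = |S x - S y| M(x) M(y) / (d(x1,x3) d(x1,x2) d(x3,x2)) for the coordinate
   S(x) = d(x3,x) d(x1,x2) / M(x), a continuous bijection of I onto [0,1]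
   with S(x1) = 1, S(x2) = 1/2, S(x3) = 0.  Every cross ratio triple of d is
   therefore a rescaling of the cross ratio triple of |S x - S y|, so the map
   S'^-1 o S is Möbius, and it is bi-Lipschitz.  Conversely a Möbius map fixing
   the three marked points preserves crt(x1,x2,x3,x) = (S x : |1 - 2 S x| : 1 - S x)
   up to scaling, hence preserves S and is S'^-1 o S. *)

From Stdlib Require Import Reals Lra ClassicalEpsilon.
Open Scope R_scope.
Set Implicit Arguments.

Section MetricFacts.

Variables (a b : R) (d : R -> R -> R).
Hypothesis Hmet : is_metric_on a b d.

Lemma dist_ge0 x y : inI a b x -> inI a b y -> 0 <= d x y.
Proof. destruct Hmet as [Hge0 _]; auto. Qed.

Lemma dist_gt0 x y : inI a b x -> inI a b y -> x <> y -> 0 < d x y.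
Proof.
  intros Hx Hy Hxy; destruct Hmet as [Hge0 [Hzero _]].
  destruct (Rle_lt_or_eq_dec 0 (d x y) (Hge0 x y Hx Hy)) as [Hlt | Heq]; auto.
  exfalso; apply Hxy, (Hzero x y Hx Hy); auto.
Qed.

Lemma dist_eq0 x y : inI a b x -> inI a b y -> d x y = 0 -> x = y.
Proof. destruct Hmet as [_ [Hzero _]]; intros Hx Hy; apply Hzero; auto. Qed.

Lemma dist_xx x : inI a b x -> d x x = 0.
Proof. destruct Hmet as [_ [Hzero _]]; intros Hx; apply (Hzero x x Hx Hx); auto. Qed.

Lemma dist_sym x y : inI a b x -> inI a b y -> d x y = d y x.
Proof. destruct Hmet as [_ [_ [Hsym _]]]; auto. Qed.

Lemma dist_diff_le z x y : inI a b z -> inI a b x -> inI a b y ->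
  Rabs (d z x - d z y) <= d x y.
Proof.
  intros Hz Hx Hy; destruct Hmet as [_ [_ [_ Htri]]].
  pose proof (Htri z x y Hz Hx Hy); pose proof (Htri z y x Hz Hy Hx).
  rewrite (dist_sym Hy Hx) in *.
  apply Rabs_le; lra.
Qed.

End MetricFacts.

Lemma lipschitz_continuous_on_metric a b d d' f L :
  0 <= L ->
  (forall x y, inI a b x -> inI a b y -> d' (f x) (f y) <= L * d x y) ->
  continuous_on_metric a b d d' f.
Proof.
  intros HL Hlip x Hx eps Heps.
  exists (eps / (L + 1)); split; [apply Rdiv_lt_0_compat; lra|].
  intros y Hy Hxy.
  assert (L * (eps / (L + 1)) < eps).
  { replace (L * (eps / (L + 1))) with (eps - eps / (L + 1)) by (field; lra).
    assert (0 < eps / (L + 1)) by (apply Rdiv_lt_0_compat; lra).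
    lra. }
  pose proof (Hlip x y Hx Hy); nra.
Qed.

Definition clamp (a b x : R) : R := Rmax a (Rmin b x).

Lemma clamp_in a b x : a <= b -> inI a b (clamp a b x).
Proof.
  unfold clamp, inI, Rmax, Rmin; intros Hab.
  destruct (Rle_dec b x); destruct (Rle_dec a _); lra.
Qed.

Lemma clamp_id a b x : inI a b x -> clamp a b x = x.
Proof.
  unfold clamp, inI, Rmax, Rmin; intros Hx.
  destruct (Rle_dec b x); destruct (Rle_dec a _); lra.
Qed.

Lemma clamp_dist_le a b x y : a <= b -> Rabs (clamp a b x - clamp a b y) <= Rabs (x - y).
Proof.
  unfold clamp, Rmax, Rmin; intros Hab.
  destruct (Rle_dec b x); destruct (Rle_dec b y);
  repeat match goal with |- context [Rle_dec ?u ?v] => destruct (Rle_dec u v) end;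
  unfold Rabs;
  repeat match goal with |- context [Rcase_abs ?u] => destruct (Rcase_abs u) end; lra.
Qed.

Definition rp2_scale (r : R) (t : R * R * R) : R * R * R :=
  let '(u, v, w) := t in (r * u, r * v, r * w).

Lemma rp2_eq_scale r t : r <> 0 -> rp2_eq t (rp2_scale r t).
Proof. destruct t as [[u v] w]; intros Hr; exists r; simpl; auto. Qed.

Lemma rp2_eq_sym t t' : rp2_eq t t' -> rp2_eq t' t.
Proof.
  intros [lam [Hlam [E1 [E2 E3]]]]; exists (/ lam).
  split; [apply Rinv_neq_0_compat; auto|].
  rewrite E1, E2, E3; repeat split; field; auto.
Qed.

Lemma rp2_eq_trans t t' t'' : rp2_eq t t' -> rp2_eq t' t'' -> rp2_eq t t''.
Proof.
  intros [l [Hl [E1 [E2 E3]]]] [l' [Hl' [F1 [F2 F3]]]]; exists (l' * l).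
  split; [apply Rmult_integral_contrapositive; auto|].
  rewrite F1, F2, F3, E1, E2, E3; repeat split; ring.
Qed.

(** * Metric charts *)

Record normal_chart (a b : R) (d : R -> R -> R) (p c q : R)
    (s m : R -> R) (k : R) : Prop := {
  chart_dist : forall x y, inI a b x -> inI a b y ->
    d x y = Rabs (s x - s y) * m x * m y / k;
  chart_k_pos : 0 < k;
  chart_m_lb : exists m0, 0 < m0 /\ forall x, inI a b x -> m0 <= m x;
  chart_m_ub : exists m1, forall x, inI a b x -> m x <= m1;
  chart_inj : forall x y, inI a b x -> inI a b y -> s x = s y -> x = y;
  chart_range : forall x, inI a b x -> 0 <= s x <= 1;
  chart_onto : forall t, 0 <= t <= 1 -> exists x, inI a b x /\ s x = t;
  chart_p_in : inI a b p;
  chart_c_in : inI a b c;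
  chart_q_in : inI a b q;
  chart_p : s p = 1;
  chart_c : s c = 1 / 2;
  chart_q : s q = 0 }.

Definition coord_dist (s : R -> R) (x y : R) : R := Rabs (s x - s y).

Section ChartCrossRatio.

Variables (a b : R) (d : R -> R -> R) (p c q : R) (s m : R -> R) (k : R).
Hypothesis Hchart : normal_chart a b d p c q s m k.

Lemma chart_m_pos x : inI a b x -> 0 < m x.
Proof.
  destruct (chart_m_lb Hchart) as [m0 [Hm0 Hlb]].
  intros Hx; specialize (Hlb x Hx); lra.
Qed.

Lemma crt_chart x y z w :
  inI a b x -> inI a b y -> inI a b z -> inI a b w ->
  crt d x y z w =
  rp2_scale (m x * m y * m z * m w / (k * k)) (crt (coord_dist s) x y z w).
Proof.
  intros Hx Hy Hz Hw; pose proof (chart_k_pos Hchart).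
  unfold crt, coord_dist; simpl.
  rewrite !(chart_dist Hchart) by assumption.
  f_equal; [f_equal|]; field; lra.
Qed.

Lemma rp2_eq_crt_chart x y z w :
  inI a b x -> inI a b y -> inI a b z -> inI a b w ->
  rp2_eq (crt (coord_dist s) x y z w) (crt d x y z w).
Proof.
  intros Hx Hy Hz Hw; rewrite crt_chart by assumption.
  pose proof (chart_k_pos Hchart).
  pose proof (chart_m_pos Hx); pose proof (chart_m_pos Hy).
  pose proof (chart_m_pos Hz); pose proof (chart_m_pos Hw).
  apply rp2_eq_scale, Rgt_not_eq, Rdiv_lt_0_compat; [|nra].
  repeat apply Rmult_lt_0_compat; assumption.
Qed.

End ChartCrossRatio.

(** * The chart of a Ptolemy segment *)

Definition ptolemy_weight (d : R -> R -> R) (p c q x : R) : R :=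
  d q x * d p c + d p x * d q c.

Definition ptolemy_coord (d : R -> R -> R) (p c q x : R) : R :=
  d q x * d p c / ptolemy_weight d p c q x.

Section PtolemyChart.

Variables (a b : R) (d : R -> R -> R) (p c q : R).
Hypothesis Hseg : ptolemy_segment a b d.
Hypothesis Hends : (p = a /\ q = b) \/ (p = b /\ q = a).
Hypothesis Hc : a < c < b.

Let Hmet : is_metric_on a b d := proj1 (proj2 Hseg).

Local Notation M := (ptolemy_weight d p c q).
Local Notation S := (ptolemy_coord d p c q).
Local Notation K := (d p q * d p c * d q c).

Lemma ptolemy_marked_points :
  inI a b p /\ inI a b c /\ inI a b q /\ p <> q /\ p <> c /\ q <> c.
Proof.
  pose proof Hseg as [Hab _].
  destruct Hends as [[Ep Eq] | [Ep Eq]]; rewrite Ep, Eq; unfold inI; repeat split; lra.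
Qed.

Lemma ptolemy_marked_dist_pos : 0 < d p q /\ 0 < d p c /\ 0 < d q c.
Proof.
  destruct ptolemy_marked_points as (Hp & Hcin & Hq & Hpq & Hpc & Hqc).
  repeat split; apply (dist_gt0 Hmet); assumption.
Qed.

Lemma ptolemy_endpoints x y : inI a b x -> inI a b y -> x <= y ->
  d b x * d a y - d b y * d a x = d a b * d x y.
Proof.
  intros Hx Hy Hxy; pose proof Hseg as [Hab [_ [_ Hpt]]].
  assert (Ha : inI a b a) by (unfold inI; lra).
  assert (Hb : inI a b b) by (unfold inI; lra).
  pose proof (Hpt a x y b Ha Hb ltac:(unfold inI in Hx; lra) Hxy ltac:(unfold inI in Hy; lra)).
  rewrite (dist_sym Hmet Hb Hx), (dist_sym Hmet Hb Hy), (dist_sym Hmet Hx Hy); lra.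
Qed.

Lemma ptolemy_marked_endpoints x y : inI a b x -> inI a b y ->
  Rabs (d q x * d p y - d q y * d p x) = d p q * d x y.
Proof.
  assert (Hle : forall u v, inI a b u -> inI a b v -> u <= v ->
            Rabs (d q u * d p v - d q v * d p u) = d p q * d u v).
  { intros u v Hu Hv Huv.
    pose proof (dist_ge0 Hmet Hu Hv).
    pose proof Hseg as [Hab _].
    assert (Ha : inI a b a) by (unfold inI; lra).
    assert (Hb : inI a b b) by (unfold inI; lra).
    destruct Hends as [[Ep Eq] | [Ep Eq]]; rewrite Ep, Eq.
    - rewrite ptolemy_endpoints by assumption.
      apply Rabs_pos_eq, Rmult_le_pos; [apply (dist_ge0 Hmet) |]; assumption.
    - replace (d a u * d b v - d a v * d b u) with (- (d b u * d a v - d b v * d a u)) by ring.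
      rewrite Rabs_Ropp, ptolemy_endpoints, (dist_sym Hmet Hb Ha) by assumption.
      apply Rabs_pos_eq, Rmult_le_pos; [apply (dist_ge0 Hmet) |]; assumption. }
  intros Hx Hy; destruct (Rle_dec x y) as [Hxy | Hxy]; [auto|].
  rewrite Rabs_minus_sym, (dist_sym Hmet Hx Hy); apply Hle; auto; lra.
Qed.

Lemma ptolemy_weight_pos x : inI a b x -> 0 < M x.
Proof.
  intros Hx; destruct ptolemy_marked_points as (Hp & _ & Hq & _).
  destruct ptolemy_marked_dist_pos as (Hpq & Hpc & Hqc).
  pose proof (dist_ge0 Hmet Hq Hx); pose proof (dist_ge0 Hmet Hp Hx).
  unfold ptolemy_weight.
  destruct (Req_dec x p) as [-> | Hxp].
  - rewrite (dist_sym Hmet Hq Hp); nra.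
  - pose proof (dist_gt0 Hmet Hp Hx (not_eq_sym Hxp)); nra.
Qed.

Lemma ptolemy_dist x y : inI a b x -> inI a b y -> d x y = Rabs (S x - S y) * M x * M y / K.
Proof.
  intros Hx Hy.
  pose proof (ptolemy_weight_pos Hx); pose proof (ptolemy_weight_pos Hy).
  destruct ptolemy_marked_dist_pos as (Hpq & Hpc & Hqc).
  assert (HS : S x - S y = d p c * d q c / (M x * M y) * (d q x * d p y - d q y * d p x)).
  { unfold ptolemy_coord; unfold ptolemy_weight in *; field; lra. }
  rewrite HS, Rabs_mult, ptolemy_marked_endpoints, Rabs_pos_eq by
    (assumption || (apply Rlt_le, Rdiv_lt_0_compat; nra)).
  field; repeat split; lra.
Qed.

Lemma ptolemy_coord_marked : S p = 1 /\ S c = 1 / 2 /\ S q = 0.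
Proof.
  destruct ptolemy_marked_points as (Hp & Hcin & Hq & _).
  destruct ptolemy_marked_dist_pos as (Hpq & Hpc & Hqc).
  unfold ptolemy_coord, ptolemy_weight.
  rewrite (dist_xx Hmet Hp), (dist_xx Hmet Hq), (dist_sym Hmet Hq Hp).
  repeat split; field; nra.
Qed.

Lemma ptolemy_coord_range x : inI a b x -> 0 <= S x <= 1.
Proof.
  intros Hx; pose proof (ptolemy_weight_pos Hx).
  destruct ptolemy_marked_points as (Hp & Hcin & Hq & _).
  pose proof (dist_ge0 Hmet Hq Hx); pose proof (dist_ge0 Hmet Hp Hx).
  pose proof (dist_ge0 Hmet Hp Hcin); pose proof (dist_ge0 Hmet Hq Hcin).
  assert (Hcompl : 1 - S x = d p x * d q c / M x)
    by (unfold ptolemy_coord; unfold ptolemy_weight in *; field; lra).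
  assert (0 <= / M x) by (left; apply Rinv_0_lt_compat; assumption).
  split.
  - apply Rmult_le_pos; [apply Rmult_le_pos |]; assumption.
  - assert (0 <= d p x * d q c / M x) by (apply Rmult_le_pos; [apply Rmult_le_pos |]; assumption).
    lra.
Qed.

Lemma ptolemy_coord_inj x y : inI a b x -> inI a b y -> S x = S y -> x = y.
Proof.
  intros Hx Hy Hxy; apply (dist_eq0 Hmet Hx Hy).
  rewrite ptolemy_dist, Hxy, Rminus_diag, Rabs_R0 by assumption.
  unfold Rdiv; ring.
Qed.

(* The chart is extended to all of R through [clamp a b], so that the
   intermediate and extreme value theorems of the library apply. *)
Lemma dist_clamp_continuous z x0 : inI a b z ->
  continuity_pt (fun x => d z (clamp a b x)) x0.
Proof.
  intros Hz eps Heps; pose proof Hseg as [Hab [_ [Htop _]]].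
  assert (Hu : inI a b (clamp a b x0)) by (apply clamp_in; lra).
  destruct (proj1 (Htop _ Hu) eps Heps) as [delta [Hdelta Hball]].
  exists delta; split; [assumption|]; intros x [_ Hx]; simpl in *; unfold R_dist in *.
  assert (Hv : inI a b (clamp a b x)) by (apply clamp_in; lra).
  pose proof (clamp_dist_le x0 x (Rlt_le _ _ Hab)).
  rewrite Rabs_minus_sym in Hx.
  pose proof (Hball _ Hv ltac:(lra)).
  pose proof (dist_diff_le Hmet Hz Hv Hu).
  rewrite (dist_sym Hmet Hv Hu) in *; lra.
Qed.

Lemma ptolemy_weight_clamp_continuous x0 : continuity_pt (fun x => M (clamp a b x)) x0.
Proof.
  destruct ptolemy_marked_points as (Hp & _ & Hq & _).
  unfold ptolemy_weight.
  apply (continuity_pt_plus (fun x => d q (clamp a b x) * d p c)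
                            (fun x => d p (clamp a b x) * d q c));
    [apply (continuity_pt_mult _ (fun _ => d p c)) | apply (continuity_pt_mult _ (fun _ => d q c))];
    (apply dist_clamp_continuous; assumption) || (apply continuity_pt_const; intros ? ?; reflexivity).
Qed.

Lemma ptolemy_coord_clamp_continuous x0 : continuity_pt (fun x => S (clamp a b x)) x0.
Proof.
  destruct ptolemy_marked_points as (Hp & _ & Hq & _); pose proof Hseg as [Hab _].
  unfold ptolemy_coord.
  apply (continuity_pt_div (fun x => d q (clamp a b x) * d p c) (fun x => M (clamp a b x))).
  - apply (continuity_pt_mult _ (fun _ => d p c));
      [apply dist_clamp_continuous | apply continuity_pt_const; intros ? ?]; auto.
  - apply ptolemy_weight_clamp_continuous.
  - apply Rgt_not_eq, ptolemy_weight_pos, clamp_in; lra.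
Qed.

Lemma ptolemy_coord_onto t : 0 <= t <= 1 -> exists x, inI a b x /\ S x = t.
Proof.
  intros Ht; pose proof Hseg as [Hab _].
  destruct ptolemy_coord_marked as (Hsp & _ & Hsq).
  assert (Hcont : continuity (fun x => S (clamp a b x) - t)).
  { intros x; apply (continuity_pt_minus _ (fun _ => t));
      [apply ptolemy_coord_clamp_continuous | apply continuity_pt_const; intros ? ?; auto]. }
  destruct (IVT_cor _ a b Hcont (Rlt_le _ _ Hab)) as [z [Hz Hzt]].
  - rewrite !clamp_id by (unfold inI; lra).
    destruct Hends as [[Ep Eq] | [Ep Eq]]; rewrite <- Ep, <- Eq, Hsp, Hsq; nra.
  - exists z; split; [exact Hz|].
    rewrite clamp_id in Hzt by exact Hz; lra.
Qed.

Lemma ptolemy_weight_bounds :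
  exists m0 m1, 0 < m0 /\ forall x, inI a b x -> m0 <= M x <= m1.
Proof.
  pose proof Hseg as [Hab _].
  destruct (continuity_ab_min (fun x => M (clamp a b x)) a b (Rlt_le _ _ Hab))
    as [xmin [Hmin Hxmin]]; [intros; apply ptolemy_weight_clamp_continuous|].
  destruct (continuity_ab_maj (fun x => M (clamp a b x)) a b (Rlt_le _ _ Hab))
    as [xmax [Hmax Hxmax]]; [intros; apply ptolemy_weight_clamp_continuous|].
  exists (M xmin), (M xmax); split; [apply ptolemy_weight_pos; exact Hxmin|].
  intros x Hx; specialize (Hmin x Hx); specialize (Hmax x Hx).
  rewrite !clamp_id in Hmin, Hmax by assumption; lra.
Qed.

Lemma ptolemy_normal_chart : normal_chart a b d p c q S M K.
Proof.
  destruct ptolemy_marked_points as (Hp & Hcin & Hq & _).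
  destruct ptolemy_marked_dist_pos as (Hpq & Hpc & Hqc).
  destruct ptolemy_coord_marked as (Hsp & Hsc & Hsq).
  destruct ptolemy_weight_bounds as [m0 [m1 [Hm0 Hbounds]]].
  constructor; try assumption.
  - exact ptolemy_dist.
  - apply Rmult_lt_0_compat; [apply Rmult_lt_0_compat|]; assumption.
  - exists m0; split; [assumption|]; intros x Hx; apply Hbounds, Hx.
  - exists m1; intros x Hx; apply Hbounds, Hx.
  - exact ptolemy_coord_inj.
  - exact ptolemy_coord_range.
  - exact ptolemy_coord_onto.
Qed.

End PtolemyChart.

(** * Transfer of a chart *)

Definition chart_transfer (a' b' : R) (s' s : R -> R) (x : R) : R :=
  epsilon (inhabits a') (fun y => inI a' b' y /\ s' y = s x).

Section Transfer.

Variables (a b : R) (d : R -> R -> R) (p c q : R) (s m : R -> R) (k : R).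
Variables (a' b' : R) (d' : R -> R -> R) (p' c' q' : R) (s' m' : R -> R) (k' : R).
Hypothesis Hchart : normal_chart a b d p c q s m k.
Hypothesis Hchart' : normal_chart a' b' d' p' c' q' s' m' k'.

Let phi := chart_transfer a' b' s' s.

Lemma chart_transfer_spec x : inI a b x -> inI a' b' (phi x) /\ s' (phi x) = s x.
Proof.
  intros Hx; unfold phi, chart_transfer; apply epsilon_spec.
  apply (chart_onto Hchart'), (chart_range Hchart), Hx.
Qed.

Lemma chart_transfer_eq x y : inI a b x -> inI a' b' y -> s' y = s x -> phi x = y.
Proof.
  intros Hx Hy Hsy; destruct (chart_transfer_spec Hx) as [Hphi Hsphi].
  apply (chart_inj Hchart'); congruence.
Qed.

Lemma chart_transfer_lipschitz : exists L, 0 <= L /\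
  forall x y, inI a b x -> inI a b y -> d' (phi x) (phi y) <= L * d x y.
Proof.
  destruct (chart_m_lb Hchart) as [m0 [Hm0 Hlb]].
  destruct (chart_m_ub Hchart') as [m1 Hub].
  pose proof (chart_k_pos Hchart).
  pose proof (chart_k_pos Hchart').
  set (L := m1 * m1 * k / (k' * (m0 * m0))).
  assert (HL : 0 <= L).
  { apply Rmult_le_pos; [apply Rmult_le_pos; [apply Rle_0_sqr | lra] |].
    left; apply Rinv_0_lt_compat, Rmult_lt_0_compat; nra. }
  exists L; split; [exact HL|]; intros x y Hx Hy.
  destruct (chart_transfer_spec Hx) as [Hfx Hsx].
  destruct (chart_transfer_spec Hy) as [Hfy Hsy].
  rewrite (chart_dist Hchart Hx Hy), (chart_dist Hchart' Hfx Hfy), Hsx, Hsy.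
  set (A := Rabs (s x - s y)); assert (0 <= A) by apply Rabs_pos.
  pose proof (Hlb x Hx); pose proof (Hlb y Hy).
  pose proof (Hub _ Hfx); pose proof (Hub _ Hfy).
  pose proof (chart_m_pos Hchart' Hfx); pose proof (chart_m_pos Hchart' Hfy).
  assert (Hupper : A * m' (phi x) * m' (phi y) / k' <= A * (m1 * m1) / k').
  { unfold Rdiv; apply Rmult_le_compat_r; [left; apply Rinv_0_lt_compat; lra|].
    rewrite Rmult_assoc; apply Rmult_le_compat_l; [|apply Rmult_le_compat]; lra. }
  assert (Hlower : A * (m0 * m0) / k <= A * m x * m y / k).
  { unfold Rdiv; apply Rmult_le_compat_r; [left; apply Rinv_0_lt_compat; lra|].
    rewrite Rmult_assoc; apply Rmult_le_compat_l; [|apply Rmult_le_compat]; lra. }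
  apply (Rle_trans _ _ _ Hupper).
  replace (A * (m1 * m1) / k') with (L * (A * (m0 * m0) / k)) by (unfold L; field; nra).
  apply Rmult_le_compat_l; assumption.
Qed.

Lemma chart_transfer_continuous : continuous_on_metric a b d d' phi.
Proof.
  destruct chart_transfer_lipschitz as [L [HL Hlip]].
  exact (lipschitz_continuous_on_metric d d' phi HL Hlip).
Qed.

Lemma chart_transfer_mobius : mobius_map a b d a' b' d' phi.
Proof.
  split.
  - intros x y Hx Hy Hxy.
    destruct (chart_transfer_spec Hx) as [_ Hsx], (chart_transfer_spec Hy) as [_ Hsy].
    apply (chart_inj Hchart); congruence.
  - intros x y z w Hx Hy Hz Hw _.
    destruct (chart_transfer_spec Hx) as [Hfx Hsx], (chart_transfer_spec Hy) as [Hfy Hsy],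
      (chart_transfer_spec Hz) as [Hfz Hsz], (chart_transfer_spec Hw) as [Hfw Hsw].
    assert (Hcoord : crt (coord_dist s') (phi x) (phi y) (phi z) (phi w)
                     = crt (coord_dist s) x y z w)
      by (unfold crt, coord_dist; rewrite Hsx, Hsy, Hsz, Hsw; reflexivity).
    apply rp2_eq_trans with (crt (coord_dist s) x y z w).
    + apply rp2_eq_sym, (rp2_eq_crt_chart Hchart); assumption.
    + rewrite <- Hcoord; apply (rp2_eq_crt_chart Hchart'); assumption.
Qed.

Lemma mobius_preserves_chart psi :
  (forall x, inI a b x -> inI a' b' (psi x)) -> mobius_map a b d a' b' d' psi ->
  psi p = p' -> psi c = c' -> psi q = q' ->
  forall x, inI a b x -> s' (psi x) = s x.
Proof.
  intros Hin [_ Hmob] Hp Hc Hq x Hx.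
  pose proof (chart_p_in Hchart) as Hpin.
  pose proof (chart_c_in Hchart) as Hcin.
  pose proof (chart_q_in Hchart) as Hqin.
  assert (Hadm : admissible p c q x).
  { pose proof (chart_p Hchart); pose proof (chart_c Hchart); pose proof (chart_q Hchart).
    repeat split; intros [E1 E2]; subst; lra. }
  assert (Hcrt : rp2_eq (crt (coord_dist s) p c q x)
                        (crt (coord_dist s') (psi p) (psi c) (psi q) (psi x))).
  { apply rp2_eq_trans with (crt d p c q x).
    { apply (rp2_eq_crt_chart Hchart); assumption. }
    apply rp2_eq_trans with (crt d' (psi p) (psi c) (psi q) (psi x)); [auto|].
    apply rp2_eq_sym, (rp2_eq_crt_chart Hchart'); auto. }
  rewrite Hp, Hc, Hq in Hcrt; unfold crt, coord_dist in Hcrt.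
  rewrite (chart_p Hchart), (chart_c Hchart), (chart_q Hchart),
    (chart_p Hchart'), (chart_c Hchart'), (chart_q Hchart') in Hcrt.
  pose proof (chart_range Hchart Hx).
  pose proof (chart_range Hchart' (Hin x Hx)).
  destruct Hcrt as [lam [_ [E1 [_ E3]]]]; simpl in E1, E3.
  rewrite (Rabs_pos_eq (1 - 1 / 2)), (Rabs_pos_eq (1 / 2 - 0)), (Rabs_left1 (0 - s x)),
    (Rabs_left1 (0 - s' (psi x))), (Rabs_pos_eq (1 - s x)), (Rabs_pos_eq (1 - s' (psi x)))
    in * by lra.
  (* adding the first and third coordinates gives [lam = 1] *)
  assert (lam = 1) by lra; subst lam; lra.
Qed.

End Transfer.

Lemma chart_transfer_homeomorphism a b d p c q s m k a' b' d' p' c' q' s' m' k' :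
  normal_chart a b d p c q s m k -> normal_chart a' b' d' p' c' q' s' m' k' ->
  homeomorphism_on a b d a' b' d' (chart_transfer a' b' s' s).
Proof.
  intros H H'; split; [|split; [|exists (chart_transfer a b s s')]].
  - intros x Hx; apply (chart_transfer_spec H H' Hx).
  - apply (chart_transfer_continuous H H').
  - split; [|split; [|split]].
    + intros y Hy; apply (chart_transfer_spec H' H Hy).
    + intros x Hx.
      destruct (chart_transfer_spec H H' Hx) as [Hy Hsy].
      apply (chart_transfer_eq H' H); auto.
    + intros y Hy.
      destruct (chart_transfer_spec H' H Hy) as [Hx Hsx].
      apply (chart_transfer_eq H H'); auto.
    + apply (chart_transfer_continuous H' H).
Qed.

Theorem theorem3p1 (a b : R) (d : R -> R -> R) (a' b' : R) (d' : R -> R -> R)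
  (x1 x2 x3 x1' x2' x3' : R) :
  ptolemy_segment a b d -> ptolemy_segment a' b' d' ->
  ((x1 = a /\ x3 = b) \/ (x1 = b /\ x3 = a)) ->
  ((x1' = a' /\ x3' = b') \/ (x1' = b' /\ x3' = a')) ->
  a < x2 < b -> a' < x2' < b' ->
  exists phi : R -> R,
    (homeomorphism_on a b d a' b' d' phi /\ mobius_map a b d a' b' d' phi /\
     phi x1 = x1' /\ phi x2 = x2' /\ phi x3 = x3') /\
    (forall psi : R -> R,
       homeomorphism_on a b d a' b' d' psi /\ mobius_map a b d a' b' d' psi /\
       psi x1 = x1' /\ psi x2 = x2' /\ psi x3 = x3' ->
       forall x, inI a b x -> psi x = phi x).
Proof.
  intros Hseg Hseg' Hends Hends' Hx2 Hx2'.
  pose proof (ptolemy_normal_chart Hseg Hends Hx2) as H.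
  pose proof (ptolemy_normal_chart Hseg' Hends' Hx2') as H'.
  exists (chart_transfer a' b' (ptolemy_coord d' x1' x2' x3') (ptolemy_coord d x1 x2 x3)).
  split; [split; [|split; [|split; [|split]]] |].
  - exact (chart_transfer_homeomorphism H H').
  - exact (chart_transfer_mobius H H').
  - apply (chart_transfer_eq H H'); [apply H | apply H' | rewrite (chart_p H), (chart_p H'); reflexivity].
  - apply (chart_transfer_eq H H'); [apply H | apply H' | rewrite (chart_c H), (chart_c H'); reflexivity].
  - apply (chart_transfer_eq H H'); [apply H | apply H' | rewrite (chart_q H), (chart_q H'); reflexivity].
  - intros psi [[Hin _] [Hmob [Hp [Hc Hq]]]] x Hx.
    symmetry; apply (chart_transfer_eq H H' Hx (Hin x Hx)).
    exact (mobius_preserves_chart H H' Hin Hmob Hp Hc Hq Hx).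
Qed.
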